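(* Let $n,b$ be integers with $1<n<b$, let $C$ be an $(n,b)$-permutiple class, and let $G_C$ be its graph. The following statements are equivalent: (1) $\overline{G}_C$ is the graph of a permutiple class, i.e. there is an $(n,b)$-permutiple $q$ with $G_q=\overline{G}_C$; (2) the state $0$ is a vertex of $\overline{\Gamma}_C$; (3) the state $n-1$ is a vertex of $\Gamma_C$.
   Context: For digits $0\le d_j<b$, $(d_k,\ldots,d_0)_b$ denotes $\sum_{j=0}^k d_jb^j$ (leading zero digits allowed). For a permutation $\sigma$ of $\{0,\ldots,k\}$, $(d_k,\ldots,d_0)_b$ is an $(n,b,\sigma)$-permutiple if $(d_k,\ldots,d_0)_b=n\cdot(d_{\sigma(k)},\ldots,d_{\sigma(0)})_b$, and an $(n,b)$-permutiple if this holds for some $\sigma$. The graph $G_p$ of such a $p$ is the directed graph with vertex set $\{0,\ldots,b-1\}$ and edge set $\{(d_j,d_{\sigma(j)})\mid 0\le j\le k\}$. The class of an $(n,b)$-permutiple $p$ is the set $C$ of all $(n,b)$-permutiples $q$ with $G_q$ a subgraph of $G_p$; its graph is $G_C=G_p$. For a digit $d$ put $\overline d=b-1-d$, for a state $c\in\{0,\ldots,n-1\}$ put $\overline c=n-1-c$. The reflection $\overline{G}$ of a directed graph $G$ on $\{0,\ldots,b-1\}$ has the same vertices and edges $(\overline{d}_1,\overline{d}_2)$ for edges $(d_1,d_2)$ of $G$. Let $\lambda(x)$ be the least non-negative residue of $x$ mod $b$; the mother graph $M$ is the directed graph on $\{0,\ldots,b-1\}$ with edges the pairs $(d_1,d_2)$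 with $\lambda(d_1+(b-n)d_2)\le n-1$. The Hoey-Sloane graph $\Gamma$ is the edge-labelled directed graph on states $\{0,\ldots,n-1\}$ in which $(c_1,c_2)$ is an edge labelled by every edge $(d_1,d_2)$ of $M$ with $n d_2-d_1+c_1=bc_2$ (an edge exists iff there is at least one such label). The cycle image of a directed cycle $C_0$ of $M$ is the edge-labelled subgraph of $\Gamma$ with edges the $(c_1,c_2)$ for which $\{(d_1,d_2)\in C_0\mid n d_2-d_1+c_1=bc_2\}$ is nonempty, labelled by this set, and vertices the endpoints of these edges. $\Gamma_C$ is the union (of vertices, edges and labels) of the cycle images of the directed cycles of $M$ contained in $G_C$. The reflection $\overline{\Gamma}_C$ has vertices $\overline{c}$, edges $(\overline{c}_1,\overline{c}_2)$ and labels $(\overline{d}_1,\overline{d}_2)$ for the vertices $c$, edges $(c_1,c_2)$ and labels $(d_1,d_2)$ of $\Gamma_C$. *)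

From mathcomp Require Import all_boot all_order all_algebra all_fingroup.
Set Implicit Arguments. Unset Strict Implicit. Unset Printing Implicit Defensive.
Import GRing.Theory Num.Theory.

(* A digit string (d_k,...,d_0)_b is given by k and d : 'I_(k+1) -> nat,
   with d j the digit of weight b^j. *)
Definition digval (b k : nat) (d : 'I_k.+1 -> nat) : nat :=
  \sum_(j < k.+1) d j * b ^ j.

Definition permutiple (n b k : nat) (d : 'I_k.+1 -> nat) (s : {perm 'I_k.+1}) : Prop :=
  (forall j, d j < b) /\ digval b d = n * digval b (fun j => d (s j)).

(* Directed graphs on the vertex set {0,...,b-1} are given by their edge relation. *)
Definition graph_of (k : nat) (d : 'I_k.+1 -> nat) (s : {perm 'I_k.+1}) : nat -> nat -> Prop :=
  fun x y => exists j, x = d j /\ y = d (s j).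

Definition reflect_graph (b : nat) (G : nat -> nat -> Prop) : nat -> nat -> Prop :=
  fun x y => exists d1 d2, G d1 d2 /\ d1 < b /\ d2 < b /\ x = b.-1 - d1 /\ y = b.-1 - d2.

Definition mother (n b : nat) : rel nat :=
  fun d1 d2 => [&& d1 < b, d2 < b & (d1 + (b - n) * d2) %% b <= n.-1].

(* a directed cycle of the graph with edge relation e: a nonempty duplicate-free
   sequence of vertices [v0; ...; v_{m-1}] with edges v_i -> v_{i+1 mod m}
   (loops are cycles of length 1); its edges are (x, next c x) for x in c *)
Definition dcycle (e : rel nat) (c : seq nat) : Prop :=
  [/\ c != [::], uniq c & path.cycle e c].

Definition cycle_in (G : nat -> nat -> Prop) (c : seq nat) : Prop :=
  forall x, x \in c -> G x (next c x).

(* (c1,c2) is an edge of Gamma labelled (d1,d2) (condition on the label) *)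
Definition hs_label (n b d1 d2 c1 c2 : nat) : Prop :=
  [/\ c1 < n, c2 < n &
      ((n%:Z * d2%:Z - d1%:Z + c1%:Z)%R = (b%:Z * c2%:Z)%R)].

(* c is a vertex of Gamma_C, the union of the cycle images of the directed
   cycles of M contained in G *)
Definition GammaC_vertex (n b : nat) (G : nat -> nat -> Prop) (c : nat) : Prop :=
  exists c0, [/\ dcycle (mother n b) c0, cycle_in G c0 &
    exists d1 c1 c2, [/\ d1 \in c0, hs_label n b d1 (next c0 d1) c1 c2 &
                        (c = c1 \/ c = c2)]].

Definition reflGammaC_vertex (n b : nat) (G : nat -> nat -> Prop) (c : nat) : Prop :=
  exists c', GammaC_vertex n b G c' /\ c = n.-1 - c'.

(* Multiplying q = (d_s(k),...,d_s(0))_b by n digit by digit yields carries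
   c_0 = 0, ..., c_(k+1) < n with c_j + n d_s(j) = c_(j+1) b + d_j, so the edge
   (d_j, d_s(j)) of G_p carries the Hoey-Sloane label of (c_j, c_(j+1)).  A label
   determines its edge of Gamma, and every edge of G_p lies on a cycle of M inside
   G_p (follow the cycle of s through j), so the vertices of Gamma_C are carries.
   If c_i = n-1, cutting p and q after digit i gives n Q_low = (n-1) b^i + P_low and
   P_high = n-1 + n Q_high, so rotating by i yields
   n rot(q) = rot(p) + (n-1)(b^(k+1) - 1); complementing every digit turns this
   into an exact permutiple, whose graph is the reflection of G_p.  Conversely the
   lowest digit of a permutiple with graph reflect(G_p) enters with carry 0, and
   reflecting its label gives an edge of Gamma_C leaving state n-1. *)

From mathcomp Require Import all_boot all_order all_algebra all_fingroup.
From mathcomp Require Import zify.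
Set Implicit Arguments. Unset Strict Implicit. Unset Printing Implicit Defensive.

Definition numval (b : nat) (f : nat -> nat) (m : nat) : nat :=
  \sum_(0 <= t < m) f t * b ^ t.

Lemma eq_numval b f g m :
  (forall t, t < m -> f t = g t) -> numval b f m = numval b g m.
Proof. by move=> efg; apply: eq_big_nat => t /andP[_ /efg ->]. Qed.

Lemma numvalS b f m : numval b f m.+1 = numval b f m + f m * b ^ m.
Proof. exact: big_nat_recr. Qed.

Lemma numval_cat b f m i : i <= m ->
  numval b f m = numval b f i + b ^ i * numval b (fun t => f (t + i)) (m - i).
Proof.
move=> le_im; rewrite /numval (big_cat_nat (leq0n i) le_im) /=; congr (_ + _).
rewrite -{1}(add0n i) big_addn big_distrr /=; apply: eq_bigr => t _.
by rewrite expnD mulnA mulnC.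
Qed.

Lemma numval_compl b f m : (forall t, t < m -> f t < b) ->
  numval b (fun t => b.-1 - f t) m + numval b f m + 1 = b ^ m.
Proof.
elim: m => [|m IHm] f_lt; first by rewrite /numval !big_geq.
rewrite !numvalS expnS -(IHm (fun t lt_tm => f_lt t (ltnW lt_tm))).
have := f_lt m (ltnSn m); nia.
Qed.

Lemma numval_lt b f m : (forall t, t < m -> f t < b) -> numval b f m < b ^ m.
Proof. by move/numval_compl <-; rewrite addn1 ltnS leq_addl. Qed.

Lemma numval_rot b f m i : i <= m ->
  numval b (fun t => f ((t + i) %% m)) m =
  numval b (fun t => f (t + i)) (m - i) + b ^ (m - i) * numval b f i.
Proof.
move=> le_im; rewrite (numval_cat _ _ (leq_subr i m)) subKn //.
congr (_ + _ * _); apply: eq_numval => t lt_t.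
  by rewrite modn_small //; lia.
by rewrite -addnA subnK // modnDr modn_small //; lia.
Qed.

Section Carries.

Variables (n b m : nat) (f g : nat -> nat).
Hypotheses (n_gt0 : 0 < n) (f_lt : forall t, f t < b) (g_lt : forall t, g t < b).
Hypothesis fg : numval b f m = n * numval b g m.

(* The carry out of the low [i] digits in the schoolbook product [n * numval b g m]. *)
Definition carry i := n * numval b g i %/ b ^ i.

Let expb_gt0 i : 0 < b ^ i.
Proof. by rewrite expn_gt0 (leq_ltn_trans _ (f_lt 0)). Qed.

Lemma carry0 : carry 0 = 0.
Proof. by rewrite /carry /numval big_geq // muln0 div0n. Qed.

Lemma carry_lt i : carry i < n.
Proof. by rewrite /carry ltn_divLR // ltn_mul2l n_gt0 numval_lt. Qed.

Lemma carry_low i : i <= m -> n * numval b g i = carry i * b ^ i + numval b f i.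
Proof.
move=> le_im; suff -> : numval b f i = n * numval b g i %% b ^ i by exact: divn_eq.
have := congr1 (modn^~ (b ^ i)) fg; rewrite !(numval_cat _ _ le_im) mulnDr mulnCA.
by rewrite !(mulnC (b ^ i)) !(addnC _ (_ * b ^ i)) !modnMDl modn_small // numval_lt.
Qed.

Lemma carry_high i : i <= m ->
  numval b (fun t => f (t + i)) (m - i) = carry i + n * numval b (fun t => g (t + i)) (m - i).
Proof.
move=> le_im; apply/eqP; rewrite -(eqn_pmul2l (expb_gt0 i)); apply/eqP.
have := fg; rewrite !(numval_cat _ _ le_im); have := carry_low le_im; nia.
Qed.

Lemma carry_step i : i < m -> carry i + n * g i = carry i.+1 * b + f i.
Proof.
move=> lt_im; apply/eqP; rewrite -(eqn_pmul2r (expb_gt0 i)); apply/eqP.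
have := carry_low lt_im; rewrite !numvalS expnS; have := carry_low (ltnW lt_im); nia.
Qed.

Lemma carry_rot i : i <= m ->
  n * numval b (fun t => g ((t + i) %% m)) m =
  numval b (fun t => f ((t + i) %% m)) m + carry i * (b ^ m - 1).
Proof.
move=> le_im; rewrite !numval_rot // (carry_high le_im) mulnDr mulnCA (carry_low le_im).
have : b ^ m = b ^ (m - i) * b ^ i by rewrite -expnD subnK.
have := expb_gt0 m; nia.
Qed.

Lemma numval_compl_rot i : i <= m -> carry i = n.-1 ->
  numval b (fun t => b.-1 - f ((t + i) %% m)) m =
  n * numval b (fun t => b.-1 - g ((t + i) %% m)) m.
Proof.
move=> le_im carry_i.
have := carry_rot le_im; rewrite carry_i.
have := numval_compl (fun t _ => f_lt ((t + i) %% m)) (m := m).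
have := numval_compl (fun t _ => g_lt ((t + i) %% m)) (m := m).
nia.
Qed.

End Carries.

Lemma hs_labelP n b d1 d2 c1 c2 :
  hs_label n b d1 d2 c1 c2 <-> [/\ c1 < n, c2 < n & c1 + n * d2 = c2 * b + d1].
Proof. by split=> -[lt_c1 lt_c2 e]; split=> //; lia. Qed.

Lemma hs_label_uniq n b d1 d2 c1 c2 c1' c2' : n < b ->
  hs_label n b d1 d2 c1 c2 -> hs_label n b d1 d2 c1' c2' -> c1 = c1' /\ c2 = c2'.
Proof.
move=> lt_nb /hs_labelP[lt_c1 _ e] /hs_labelP[lt_c1' _ e'].
suff ec2 : c2 = c2' by split=> //; lia.
have [lt_c|lt_c|//] := ltngtP c2 c2'.
- have : c2.+1 * b <= c2' * b by rewrite leq_mul2r lt_c orbT.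
  lia.
- have : c2'.+1 * b <= c2 * b by rewrite leq_mul2r lt_c orbT.
  lia.
Qed.

Lemma hs_label_refl n b d1 d2 c1 c2 : d1 < b -> d2 < b ->
  hs_label n b d1 d2 c1 c2 ->
  hs_label n b (b.-1 - d1) (b.-1 - d2) (n.-1 - c1) (n.-1 - c2).
Proof.
move=> lt_d1 lt_d2 [lt_c1 lt_c2 e]; split; [lia | lia |].
have Posz_refl x y : x < y -> (Posz (y.-1 - x)%N = y%:Z - 1 - x%:Z)%R by lia.
rewrite !Posz_refl //; lia.
Qed.

Lemma hs_label_mother n b d1 d2 c1 c2 : n < b -> d1 < b -> d2 < b ->
  hs_label n b d1 d2 c1 c2 -> mother n b d1 d2.
Proof.
move=> lt_nb lt_d1 lt_d2 /hs_labelP[lt_c1 lt_c2 e]; rewrite /mother lt_d1 lt_d2 /=.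
have le_c2d2 : c2 <= d2.
  have : n * d2.+1 <= b * d2.+1 by rewrite leq_mul2r (ltnW lt_nb) orbT.
  by move=> le_nb; rewrite -ltnS -(@ltn_pmul2r b); lia.
have -> : d1 + (b - n) * d2 = c1 + (d2 - c2) * b by nia.
by rewrite addnC modnMDl modn_small; lia.
Qed.

Lemma cycle_through_edge (T : eqType) (e : rel T) x y p :
  e x y -> path e y p -> last y p = x ->
  exists c, [/\ uniq c, path.cycle e c, x \in c & next c x = y].
Proof.
move=> exy pyp; case: (shortenP pyp) => {}p {}pyp uyp _ last_p; move: last_p exy.
case/lastP: p pyp uyp => [|p z] pyp uyp; rewrite ?last_rcons => <- ezy.
  by exists [:: y]; rewrite /= inE eqxx ezy.
move: uyp; rewrite -rcons_cons rcons_uniq => /andP[z_notin uyp].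
by exists [:: z, y & p]; split; rewrite /= ?z_notin ?ezy ?inE ?eqxx.
Qed.

Lemma GammaC_vertex_lt n b G c : GammaC_vertex n b G c -> c < n.
Proof. by case=> c0 [_ _ [d1 [c1 [c2 [_ [lt_c1 lt_c2 _] [->|->]]]]]]. Qed.

Lemma reflGammaC_vertex0 n b G :
  reflGammaC_vertex n b G 0 <-> GammaC_vertex n b G n.-1.
Proof.
split=> [[c [Gc /esym/eqP]]|Gn]; last by exists n.-1; rewrite subnn.
rewrite subn_eq0 => le_nc; suff -> : n.-1 = c by [].
by have := GammaC_vertex_lt Gc; lia.
Qed.

Definition digits k (d : 'I_k.+1 -> nat) (t : nat) : nat := d (inord t).

Lemma digval_numval b k (d : 'I_k.+1 -> nat) : digval b d = numval b (digits d) k.+1.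
Proof.
by rewrite /digval /numval big_mkord; apply: eq_bigr => j _; rewrite /digits inord_val.
Qed.

Definition graph_rel k (d : 'I_k.+1 -> nat) (s : {perm 'I_k.+1}) : rel nat :=
  fun x y => [exists j, (d j == x) && (d (s j) == y)].

Lemma graph_relP k (d : 'I_k.+1 -> nat) s x y :
  reflect (graph_of d s x y) (graph_rel d s x y).
Proof.
apply: (iffP existsP) => [[j /andP[/eqP <- /eqP <-]]|[j [-> ->]]]; exists j => //.
by rewrite !eqxx.
Qed.

Lemma graph_rel_path k (d : 'I_k.+1 -> nat) s j t :
  exists2 p, path (graph_rel d s) (d j) p & last (d j) p = d ((s ^+ t)%g j).
Proof.
elim: t => [|t [p pjp last_p]]; first by exists [::]; rewrite ?expg0 ?perm1.
exists (rcons p (d ((s ^+ t.+1)%g j))); rewrite ?rcons_path ?last_rcons ?pjp ?last_p //.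
by apply/graph_relP; exists ((s ^+ t)%g j); rewrite expgSr permM.
Qed.

Lemma graph_of_conj k (d : 'I_k.+1 -> nat) s (r : {perm 'I_k.+1}) x y :
  graph_of (fun j => d (r j)) (r * s * r^-1)%g x y <-> graph_of d s x y.
Proof.
have drs j : d (r ((r * s * r^-1)%g j)) = d (s (r j)) by rewrite !permM permKV.
split=> [[j [-> ->]]|[j [-> ->]]]; first by exists (r j); rewrite drs.
by exists (r^-1 j)%g; rewrite drs permKV.
Qed.

Lemma graph_of_compl b k (d : 'I_k.+1 -> nat) s x y : (forall j, d j < b) ->
  graph_of (fun j => b.-1 - d j) s x y <-> reflect_graph b (graph_of d s) x y.
Proof.
move=> d_lt; split=> [[j [-> ->]]|[_ [_ [[j [-> ->]] [_ [_ [-> ->]]]]]]]; last by exists j.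
by exists (d j), (d (s j)); repeat split=> //; exists j.
Qed.

Definition rot_ord k i (j : 'I_k.+1) : 'I_k.+1 := inord ((j + i) %% k.+1).

Lemma rot_ord_inj k i : injective (@rot_ord k i).
Proof.
move=> x y /(congr1 (@nat_of_ord _)); rewrite /rot_ord !inordK ?ltn_pmod // => /eqP.
by rewrite eqn_modDr !modn_small // => /eqP /val_inj.
Qed.

Definition rot_perm k i : {perm 'I_k.+1} := perm (@rot_ord_inj k i).

Lemma rot_permE k i t : t < k.+1 -> rot_perm k i (inord t) = inord ((t + i) %% k.+1).
Proof. by move=> lt_t; rewrite permE /rot_ord inordK. Qed.

Section Permutiple.

Variables (n b k : nat) (d : 'I_k.+1 -> nat) (s : {perm 'I_k.+1}).
Hypotheses (n_gt0 : 0 < n) (hp : permutiple n b d s).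

Local Notation pcarry := (carry n b (digits (d \o s))).

Let dig_lt t : digits d t < b := hp.1 _.
Let digs_lt t : digits (d \o s) t < b := hp.1 _.

Let numval_digits :
  numval b (digits d) k.+1 = n * numval b (digits (d \o s)) k.+1.
Proof. by have := hp.2; rewrite !digval_numval. Qed.

Lemma hs_label_carry (j : 'I_k.+1) :
  hs_label n b (d j) (d (s j)) (pcarry j) (pcarry j.+1).
Proof.
apply/hs_labelP; split; [exact: carry_lt n_gt0 dig_lt digs_lt _ ..|].
by have := carry_step n_gt0 dig_lt numval_digits (ltn_ord j); rewrite /digits /= inord_val.
Qed.

Lemma carry_refl_permutiple i : i <= k.+1 -> pcarry i = n.-1 ->
  exists k' (d' : 'I_k'.+1 -> nat) (s' : {perm 'I_k'.+1}), permutiple n b d' s' /\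
    forall x y, graph_of d' s' x y <-> reflect_graph b (graph_of d s) x y.
Proof.
move=> le_i carry_i; pose r := rot_perm k i.
exists k, (fun j => b.-1 - d (r j)), (r * s * r^-1)%g; split; last first.
  move=> x y; apply: iff_trans (graph_of_conj (fun j => b.-1 - d j) s r x y) _.
  exact: graph_of_compl hp.1.
split=> [j|]; first by have := hp.1 (r j); lia.
have e1 : numval b (digits (fun j => b.-1 - d (r j))) k.+1 =
          numval b (fun t => b.-1 - digits d ((t + i) %% k.+1)) k.+1.
  by apply: eq_numval => t lt_t; rewrite /digits rot_permE.
have e2 : numval b (digits (fun j => b.-1 - d (r ((r * s * r^-1)%g j)))) k.+1 =
          numval b (fun t => b.-1 - digits (d \o s) ((t + i) %% k.+1)) k.+1.
  by apply: eq_numval => t lt_t; rewrite /digits !permM permKV rot_permE.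
rewrite !digval_numval e1 e2.
exact: (numval_compl_rot n_gt0 dig_lt digs_lt numval_digits le_i carry_i).
Qed.

Hypothesis lt_nb : n < b.

Lemma graph_sub_mother : subrel (graph_rel d s) (mother n b).
Proof.
move=> x y /graph_relP[j [-> ->]].
exact: hs_label_mother lt_nb (hp.1 _) (hp.1 _) (hs_label_carry j).
Qed.

Lemma mother_cycle_through (j : 'I_k.+1) :
  exists c0, [/\ dcycle (mother n b) c0, cycle_in (graph_of d s) c0,
                 d j \in c0 & next c0 (d j) = d (s j)].
Proof.
have [p pp last_p] := graph_rel_path d s (s j) (#[s]%g).-1.
have {}last_p : last (d (s j)) p = d j.
  by rewrite last_p -permM -expgS prednK ?order_gt0 // expg_order perm1.
have ej : graph_rel d s (d j) (d (s j)) by apply/graph_relP; exists j.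
have [c [uc cyc jc next_j]] := cycle_through_edge ej pp last_p.
exists c; split=> //; last by move=> x xc; apply/graph_relP; exact: next_cycle cyc xc.
split=> //; last by apply: (sub_cycle graph_sub_mother).
by apply: contraTneq jc => ->.
Qed.

Lemma GammaC_vertex_label d1 d2 c1 c2 : graph_of d s d1 d2 ->
  hs_label n b d1 d2 c1 c2 -> GammaC_vertex n b (graph_of d s) c1.
Proof.
case=> j [-> ->] label; have [c0 [cyc0 in_G jc0 next_j]] := mother_cycle_through j.
exists c0; split=> //; exists (d j), c1, c2.
by rewrite next_j; split=> //; left.
Qed.

Lemma GammaC_vertex_carry c : GammaC_vertex n b (graph_of d s) c ->
  exists2 i, i <= k.+1 & pcarry i = c.
Proof.
case=> c0 [_ in_G [d1 [c1 [c2 [d1c0 label c_c12]]]]].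
have [j [ed1 enext]] := in_G d1 d1c0; rewrite enext ed1 in label; move: c_c12.
have [<- <-] := hs_label_uniq lt_nb (hs_label_carry j) label.
by case=> ->; [exists j; first exact: ltnW | exists j.+1].
Qed.

End Permutiple.

Lemma refl_permutiple_GammaC_vertex n b k (d : 'I_k.+1 -> nat) s
    k' (d' : 'I_k'.+1 -> nat) (s' : {perm 'I_k'.+1}) :
  0 < n -> n < b -> permutiple n b d s -> permutiple n b d' s' ->
  (forall x y, graph_of d' s' x y <-> reflect_graph b (graph_of d s) x y) ->
  GammaC_vertex n b (graph_of d s) n.-1.
Proof.
move=> n_gt0 lt_nb hp hq Gq.
have := hs_label_refl (hq.1 _) (hq.1 _) (hs_label_carry n_gt0 hq ord0).
have [d1 [d2 [Gd12 [lt_d1 [lt_d2 [-> ->]]]]]] :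
  reflect_graph b (graph_of d s) (d' ord0) (d' (s' ord0)) by apply/Gq; exists ord0.
have refl_invol x : x < b -> b.-1 - (b.-1 - x) = x by lia.
rewrite carry0 subn0 !refl_invol //.
exact: (GammaC_vertex_label n_gt0 hp lt_nb Gd12).
Qed.

Theorem theorem15 (n b : nat) (hn : 1 < n) (hnb : n < b)
  (k : nat) (d : 'I_k.+1 -> nat) (s : {perm 'I_k.+1})
  (hp : permutiple n b d s) :
  [<-> (exists (k' : nat) (d' : 'I_k'.+1 -> nat) (s' : {perm 'I_k'.+1}),
          permutiple n b d' s' /\
          forall x y, graph_of d' s' x y <-> reflect_graph b (graph_of d s) x y);
       reflGammaC_vertex n b (graph_of d s) 0;
       GammaC_vertex n b (graph_of d s) n.-1].
Proof.
have n_gt0 : 0 < n by exact: ltnW.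
tfae=> [[k' [d' [s' [hq Gq]]]] | | ].
- exact/reflGammaC_vertex0/(refl_permutiple_GammaC_vertex n_gt0 hnb hp hq Gq).
- by move/reflGammaC_vertex0.
- case/(GammaC_vertex_carry n_gt0 hp hnb) => i le_i carry_i.
  exact: (carry_refl_permutiple n_gt0 hp le_i carry_i).
Qed.
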